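(* For every $f\in F_0(G)$, conditional on $f_0=f$, for every $n\in\mathbb Z_+$ the inter-jump time $\xi_n$ of the interacting particle system is stochastically larger than an exponential random variable with rate $(n-1)Md+\|f\|_1$, i.e. $P_f(\xi_n>t)\ge e^{-((n-1)Md+\|f\|_1)t}$ for all $t\ge0$.
   Context: A graph is a quadruple $G=(V,E,K,m)$: $V$ is a finite or countable set of nodes, which are elements of a real Hilbert space $\mathcal H$ with inner product ''$\cdot$'' and norm $|\cdot|$; $E$ is a set of undirected edges (at most one edge between any two distinct nodes, no self-loops); the edge between $x$ and $y$ is written $\langle x,y\rangle=\langle y,x\rangle$, and $y\sim x$ means this edge exists; $K=(k_{xy})_{x,y\in V}$ with $k_{xy}=k_{yx}\ge0$ and $k_{xy}=0$ if there is no edge; $m=(m_x)_{x\in V}$ with $m_x>0$. Let $e_{xy}=(y-x)/|y-x|$. Assume $d_0=\sup_{x\in V}\#\{y:y\sim x\}<\infty$, set $d=\max\{d_0,2\}$, and assume $M=\max\{\sup_{x\in V}m_x^{-1},\sup_{\langle x,y\rangle\in E}k_{xy}\}<\infty$. $V=V_0\cup V_1$ is a fixed partition into disjoint sets. $F(G)$ is the set of functions $f$ assigning a real number $f(x)$ to each $x\in V$ and a vector $f(\langle x,y\rangle)\in\mathcal H$ that is a real multiple of $y-x$ to each edge. For $1\le\alpha<\infty$, $\|f\|_\alpha=\big(\sum_{x\in V}|f(x)|^\alpha/m_x+\sum_{\langle x,y\rangle\in E}k_{xy}|f(\langle x,y\rangle)|^\alpha\big)^{1/\alpha}$, and $\|f\|_\infty=\max\{\sup_x|f(x)|,\sup_{\langle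 x,y\rangle}|f(\langle x,y\rangle)|\}$. $F_0(G)$ is the set of $f\in F(G)$ with finitely many nonzero values such that $|f(x)|\in\mathbb Z$ and $|f(\langle x,y\rangle)|\in\mathbb Z$ for all nodes and edges. The interacting particle system (IPS) $(f_t)_{t\ge0}$ is the continuous-time Markov jump process on $F_0(G)$ with the following transitions from state $f$: (i) for each $x\in V$, at rate $|f(x)|/m_x$, for every $y\sim x$ the edge value $f(\langle x,y\rangle)$ is replaced by $f(\langle x,y\rangle)+\mathrm{sgn}(f(x))\,e_{yx}$ (all other values unchanged); (ii) for each edge $\langle x,y\rangle$, at rate $k_{xy}|f(\langle x,y\rangle)|$, with $s=\mathrm{sgn}(f(\langle x,y\rangle)\cdot e_{xy})$, the value $f(x)$ is replaced by $f(x)+s$ if $x\in V_0$ and $f(y)$ by $f(y)-s$ if $y\in V_0$ (values at nodes of $V_1$ never change; this rule is symmetric in $x,y$). $P_f,\mathbb E_f$ denote probability and expectation given $f_0=f$. $\tau_0=0$, $\tau_n$ is the time of the $n$-th jump, $\xi_n=\tau_n-\tau_{n-1}$, $h_n=f_{\tau_n}$, and $\eta_t=\sup\{n:\tau_n\le t\}$. *)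

From Stdlib Require Import Reals Lra ZArith List Classical ClassicalEpsilon.
Open Scope R_scope.

Set Implicit Arguments.

Definition cdec (P : Prop) : {P} + {~ P} := excluded_middle_informative P.

Definition finsupp {T : Type} (g : T -> Z) : Prop :=
  exists l : list T, NoDup l /\ forall x, In x l <-> g x <> 0%Z.

(* A duplicate-free list enumerating exactly the support (chosen by
   classical choice; empty list if the support is not finite). *)
Definition supp {T : Type} (g : T -> Z) : list T :=
  match cdec (finsupp g) with
  | left H => proj1_sig (constructive_indefinite_description _ H)
  | right _ => nil
  end.

Definition rsum {T : Type} (l : list T) (F : T -> R) : R :=
  fold_right Rplus 0 (map F l).

Section Graph.
(* V = nodes, E = (undirected) edges; [ends e = (x,y)] fixes a
   reference orientation of the edge <x,y>; the Hilbert-space vector value of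
   a function on the edge is encoded by its (integer, for F_0) coefficient c
   along the unit vector e_xy = (y-x)/|y-x|, i.e. f(<x,y>) = c * e_xy. *)
Variables (V E : Type) (ends : E -> V * V) (m : V -> R) (k : E -> R)
          (V0 : V -> Prop).

Definition state : Type := ((V -> Z) * (E -> Z))%type.

Definition in_F0 (f : state) : Prop := finsupp (fst f) /\ finsupp (snd f).

Definition norm1 (f : state) : R :=
  rsum (supp (fst f)) (fun x => IZR (Z.abs (fst f x)) / m x)
  + rsum (supp (snd f)) (fun e => k e * IZR (Z.abs (snd f e))).

(* The Poisson clocks of the IPS: one per node (rule (i)) and one per edge
   (rule (ii)); only clocks with possibly nonzero rate are listed. *)
Inductive clock : Type := NodeClock (x : V) | EdgeClock (e : E).

Definition clocks (f : state) : list clock :=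
  map NodeClock (supp (fst f)) ++ map EdgeClock (supp (snd f)).

Definition rate (f : state) (c : clock) : R :=
  match c with
  | NodeClock x => IZR (Z.abs (fst f x)) / m x
  | EdgeClock e => k e * IZR (Z.abs (snd f e))
  end.

Definition outcome (f : state) (c : clock) : state :=
  match c with
  | NodeClock x =>
      (* rule (i): f(<x,y>) += sgn(f(x)) e_yx for every y ~ x *)
      (fst f,
       fun e => if cdec (fst (ends e) = x) then (snd f e - Z.sgn (fst f x))%Z
                else if cdec (snd (ends e) = x) then (snd f e + Z.sgn (fst f x))%Z
                else snd f e)
  | EdgeClock e =>
      (* rule (ii), with (x,y) = ends e and s = sgn(f(<x,y>) . e_xy) *)
      let s := Z.sgn (snd f e) in
      (fun z => if cdec (z = fst (ends e)) then
                  (if cdec (V0 z) then (fst f z + s)%Z else fst f z)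
                else if cdec (z = snd (ends e)) then
                  (if cdec (V0 z) then (fst f z - s)%Z else fst f z)
                else fst f z,
       snd f)
  end.

Definition same_state (f g : state) : Prop :=
  (forall x, fst f x = fst g x) /\ (forall e, snd f e = snd g e).

Definition jump_clocks (f : state) : list clock :=
  filter (fun c => if cdec (same_state (outcome f c) f) then false else true)
         (clocks f).

Definition qrate (f : state) : R := rsum (jump_clocks f) (rate f).

(* jump_exp j f phi = E_f[ phi(h_j) ], where (h_j) is the embedded jump chain
   (a state with q = 0 is absorbing: h stays there forever). *)
Fixpoint jump_exp (j : nat) (f : state) (phi : state -> R) : R :=
  match j with
  | O => phi f
  | S j' =>
      if cdec (qrate f = 0) then phi f
      else rsum (jump_clocks f)
             (fun c => rate f c / qrate f * jump_exp j' (outcome f c) phi)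
  end.

(* P_f(xi_n > t) for n >= 1: given the jump chain, the holding time
   xi_n = tau_n - tau_(n-1) is exponential with rate q(h_(n-1))
   (xi_n = +infinity if q(h_(n-1)) = 0), hence
   P_f(xi_n > t) = E_f[ exp(-q(h_(n-1)) t) ]. *)
Definition xi_survival (n : nat) (f : state) (t : R) : R :=
  jump_exp (n - 1) f (fun g => exp (- (qrate g * t))).

End Graph.

(* Each jump raises ||.||_1 by at most M d: a node ring changes the values of its
   at most d incident edges by one, an edge ring those of its two end nodes.  So
   ||h_j||_1 <= ||f||_1 + j M d along the jump chain, while the total jump rate
   q(g), a sub-sum of the clock rates whose total is ||g||_1, is at most ||g||_1.
   Hence exp(-q(h_(n-1)) t) >= exp(-((n-1) M d + ||f||_1) t) on every path of the
   chain, and so does its expectation P_f(xi_n > t). *)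

From Pilot Require Import Defs.
From Stdlib Require Import Reals ZArith List Lia Lra Permutation Classical ClassicalEpsilon.
Open Scope R_scope.

Set Implicit Arguments.

Lemma exp_le_compat x y : x <= y -> exp x <= exp y.
Proof. intros [Hlt | ->]; [left; now apply exp_increasing | apply Rle_refl]. Qed.

Section ListSums.
Context {T : Type}.
Implicit Types (l : list T) (F G w : T -> R).

Lemma rsum_nil F : rsum nil F = 0.
Proof. reflexivity. Qed.

Lemma rsum_cons x l F : rsum (x :: l) F = F x + rsum l F.
Proof. reflexivity. Qed.

Lemma rsum_app l1 l2 F : rsum (l1 ++ l2) F = rsum l1 F + rsum l2 F.
Proof.
  induction l1 as [|x l1 IH]; simpl app; rewrite ?rsum_cons, ?rsum_nil, ?IH; ring.
Qed.

Lemma rsum_map {S : Type} (h : S -> T) (l : list S) F :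
  rsum (map h l) F = rsum l (fun x => F (h x)).
Proof. unfold rsum; now rewrite map_map. Qed.

Lemma rsum_le l F G : (forall x, In x l -> F x <= G x) -> rsum l F <= rsum l G.
Proof.
  induction l as [|x l IH]; intros H; rewrite ?rsum_cons, ?rsum_nil; [lra|].
  apply Rplus_le_compat; [apply H; now left | apply IH; intros; apply H; now right].
Qed.

Lemma rsum_ext l F G : (forall x, In x l -> F x = G x) -> rsum l F = rsum l G.
Proof. intros H; apply Rle_antisym; apply rsum_le; intros x Hx; rewrite H; auto; lra. Qed.

Lemma rsum_plus l F G : rsum l (fun x => F x + G x) = rsum l F + rsum l G.
Proof. induction l as [|x l IH]; rewrite ?rsum_cons, ?rsum_nil, ?IH; ring. Qed.

Lemma rsum_mult_r l F a : rsum l (fun x => F x * a) = rsum l F * a.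
Proof. induction l as [|x l IH]; rewrite ?rsum_cons, ?rsum_nil, ?IH; ring. Qed.

Lemma rsum_nonneg l F : (forall x, In x l -> 0 <= F x) -> 0 <= rsum l F.
Proof.
  induction l as [|x l IH]; intros H; rewrite ?rsum_cons, ?rsum_nil; [lra|].
  assert (0 <= F x) by (apply H; now left).
  assert (0 <= rsum l F) by (apply IH; intros; apply H; now right). lra.
Qed.

Lemma rsum_filter_le (p : T -> bool) l F :
  (forall x, In x l -> 0 <= F x) -> rsum (filter p l) F <= rsum l F.
Proof.
  induction l as [|x l IH]; intros H; cbn [filter]; [lra|].
  assert (rsum (filter p l) F <= rsum l F) by (apply IH; intros; apply H; now right).
  assert (0 <= F x) by (apply H; now left).
  destruct (p x); rewrite ?rsum_cons; lra.
Qed.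

Lemma rsum_le_length_mul l F a :
  (forall x, In x l -> F x <= a) -> rsum l F <= INR (length l) * a.
Proof.
  induction l as [|x l IH]; intros H; cbn [length]; rewrite ?rsum_cons, ?rsum_nil;
    [simpl; lra|].
  rewrite S_INR.
  assert (F x <= a) by (apply H; now left).
  assert (rsum l F <= INR (length l) * a) by (apply IH; intros; apply H; now right). lra.
Qed.

Lemma rsum_perm l1 l2 F : Permutation l1 l2 -> rsum l1 F = rsum l2 F.
Proof. induction 1; rewrite ?rsum_cons in *; lra. Qed.

Lemma rsum_filter_nonzero l F :
  rsum l F = rsum (filter (fun x => if cdec (F x = 0) then false else true) l) F.
Proof.
  induction l as [|x l IH]; cbn [filter]; [reflexivity|].
  destruct (cdec (F x = 0)) as [Hx|Hx]; rewrite ?rsum_cons, IH; [rewrite Hx|]; ring.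
Qed.

Lemma rsum_eq_of_support l1 l2 F : NoDup l1 -> NoDup l2 ->
  (forall x, F x <> 0 -> In x l1) -> (forall x, F x <> 0 -> In x l2) ->
  rsum l1 F = rsum l2 F.
Proof.
  intros N1 N2 C1 C2. rewrite (rsum_filter_nonzero l1), (rsum_filter_nonzero l2).
  apply rsum_perm, NoDup_Permutation; try apply NoDup_filter; auto.
  intros x; rewrite !filter_In.
  destruct (cdec (F x = 0)) as [|Hx]; split; intros [_ Hp]; try discriminate; auto.
Qed.

Lemma rsum_convex_ge l w F X :
  (forall x, In x l -> 0 <= w x) -> rsum l w <> 0 ->
  (forall x, In x l -> X <= F x) -> X <= rsum l (fun x => w x / rsum l w * F x).
Proof.
  intros Hw Hsum HX.
  assert (Hpos : 0 < rsum l w) by (pose proof (rsum_nonneg l w Hw); lra).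
  apply Rle_trans with (rsum l (fun x => w x * (X / rsum l w))).
  - rewrite rsum_mult_r. right; field; lra.
  - apply rsum_le; intros x Hx.
    replace (w x / rsum l w * F x) with (w x * (F x / rsum l w)) by (field; lra).
    apply Rmult_le_compat_l; [now apply Hw|].
    apply Rmult_le_compat_r; [left; now apply Rinv_0_lt_compat | now apply HX].
Qed.

End ListSums.

Section Supports.
Context {T : Type}.
Implicit Types (g : T -> Z) (c : T -> R) (L l : list T).

Lemma supp_spec g : finsupp g -> NoDup (supp g) /\ (forall x, In x (supp g) <-> g x <> 0%Z).
Proof.
  intros H. unfold supp. destruct (cdec (finsupp g)) as [H'|]; [|contradiction].
  exact (proj2_sig (constructive_indefinite_description _ H')).
Qed.

Definition undup l : list T := nodup (fun x y => cdec (x = y)) l.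

Lemma finsupp_of_cover g l : (forall x, g x <> 0%Z -> In x l) -> finsupp g.
Proof.
  intros Hl. exists (filter (fun x => if cdec (g x = 0%Z) then false else true) (undup l)).
  split; [apply NoDup_filter, NoDup_nodup|].
  intros x. unfold undup. rewrite filter_In, nodup_In.
  destruct (cdec (g x = 0%Z)) as [|Hx]; split.
  - intros [_ Hf]; discriminate.
  - contradiction.
  - tauto.
  - split; auto.
Qed.

Definition wnorm c g : R := rsum (supp g) (fun x => c x * IZR (Z.abs (g x))).

Lemma wnorm_eq_rsum c g l : finsupp g -> NoDup l -> (forall x, g x <> 0%Z -> In x l) ->
  wnorm c g = rsum l (fun x => c x * IZR (Z.abs (g x))).
Proof.
  intros Hg Hl Hcov. destruct (supp_spec Hg) as [Hnd Hsupp].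
  apply rsum_eq_of_support; auto; intros x Hx; [apply Hsupp | apply Hcov];
    intros Hz; rewrite Hz in Hx; apply Hx; cbn; ring.
Qed.

Definition perturbs L g g' : Prop :=
  (forall x, ~ In x L -> g' x = g x) /\ (forall x, (Z.abs (g' x) <= Z.abs (g x) + 1)%Z).

Lemma perturbs_support L g g' : finsupp g -> perturbs L g g' ->
  forall x, g' x <> 0%Z -> In x (undup (supp g ++ L)).
Proof.
  intros Hg [Hout _] x Hx. unfold undup. rewrite nodup_In, in_app_iff.
  destruct (classic (In x L)) as [|HL]; [now right|].
  left. apply (proj2 (supp_spec Hg)). now rewrite <- Hout.
Qed.

Lemma finsupp_perturbs L g g' : finsupp g -> perturbs L g g' -> finsupp g'.
Proof. intros Hg Hp. exact (finsupp_of_cover g' _ (perturbs_support Hg Hp)). Qed.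

Lemma wnorm_perturbs_le L g g' c M : finsupp g -> NoDup L ->
  (forall x, 0 <= c x <= M) -> perturbs L g g' ->
  wnorm c g' <= wnorm c g + INR (length L) * M.
Proof.
  intros Hg HL Hc Hp. set (l0 := undup (supp g ++ L)).
  assert (Hl0 : NoDup l0) by apply NoDup_nodup.
  assert (HgL : forall x, g x <> 0%Z -> In x l0).
  { intros x Hx. unfold l0, undup; apply nodup_In, in_app_iff.
    left; now apply (proj2 (supp_spec Hg)). }
  set (onL := fun x => if cdec (In x L) then c x else 0).
  rewrite (wnorm_eq_rsum c (finsupp_perturbs Hg Hp) Hl0 (perturbs_support Hg Hp)),
    (wnorm_eq_rsum c Hg Hl0 HgL).
  apply Rle_trans with (rsum l0 (fun x => c x * IZR (Z.abs (g x)) + onL x)).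
  { apply rsum_le; intros x _. destruct Hp as [Hout Hab]. unfold onL.
    destruct (cdec (In x L)) as [HxL|HxL].
    - pose proof (IZR_le _ _ (Hab x)) as Habx. rewrite plus_IZR in Habx.
      pose proof (Hc x). nra.
    - rewrite Hout by exact HxL. lra. }
  rewrite rsum_plus. apply Rplus_le_compat_l.
  rewrite (rsum_eq_of_support onL Hl0 HL).
  - apply Rle_trans with (rsum L c).
    + apply rsum_le; intros x Hx; unfold onL. destruct (cdec (In x L)); [lra | contradiction].
    + apply rsum_le_length_mul; intros x _; apply Hc.
  - intros x Hx. unfold onL in Hx. destruct (cdec (In x L)); [|lra].
    unfold l0, undup; apply nodup_In, in_app_iff; now right.
  - intros x Hx. unfold onL in Hx. destruct (cdec (In x L)); [assumption | lra].
Qed.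

End Supports.

Section JumpChain.
Variables (V E : Type) (ends : E -> V * V) (m : V -> R) (k : E -> R) (V0 : V -> Prop).
Hypotheses (Hk : forall e, 0 <= k e) (Hm : forall x, 0 < m x).

Local Notation state := (state V E).
Local Notation outcome := (@outcome V E ends V0).
Local Notation rate := (@rate V E m k).
Local Notation qrate := (@qrate V E ends m k V0).
Local Notation norm1 := (@norm1 V E m k).
Local Notation jump_exp := (@jump_exp V E ends m k V0).

Lemma rate_nonneg (g : state) c : 0 <= rate g c.
Proof.
  destruct c as [x|e]; cbn.
  - apply Rmult_le_pos; [apply IZR_le; lia | left; now apply Rinv_0_lt_compat].
  - apply Rmult_le_pos; [apply Hk | apply IZR_le; lia].
Qed.

Lemma qrate_le_norm1 (g : state) : qrate g <= norm1 g.
Proof.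
  unfold qrate, jump_clocks. eapply Rle_trans.
  - apply rsum_filter_le; intros c _; apply rate_nonneg.
  - unfold clocks. rewrite rsum_app, !rsum_map. right; reflexivity.
Qed.

(* The law of the next state is a convex combination of the [outcome g c], so a
   bound surviving every single jump survives [j] steps of the chain. *)
Lemma jump_exp_ge (P : state -> Prop) (N : state -> R) (a : R) (h : R -> R)
    (phi : state -> R) :
  0 <= a -> (forall s s', s <= s' -> h s' <= h s) ->
  (forall g c, P g -> P (outcome g c)) ->
  (forall g c, P g -> N (outcome g c) <= N g + a) ->
  (forall g, P g -> h (N g) <= phi g) ->
  forall j g, P g -> h (N g + INR j * a) <= jump_exp j g phi.
Proof.
  intros Ha Hh HP HN Hphi j. induction j as [|j IH]; intros g Hg; cbn [jump_exp].
  - rewrite Rmult_0_l, Rplus_0_r. now apply Hphi.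
  - assert (Hstep : N g + INR (S j) * a = N g + a + INR j * a) by (rewrite S_INR; ring).
    destruct (cdec (qrate g = 0)) as [_|Hq].
    + eapply Rle_trans; [apply Hh | now apply Hphi].
      pose proof (pos_INR (S j)). nra.
    + apply rsum_convex_ge; [intros c _; apply rate_nonneg | exact Hq |].
      intros c _. apply Rle_trans with (h (N (outcome g c) + INR j * a)); [|apply IH, HP, Hg].
      apply Hh. specialize (HN g c Hg). lra.
Qed.

End JumpChain.

Section LocalJumps.
Variables (V E : Type) (ends : E -> V * V) (incident : V -> list E)
          (m : V -> R) (k : E -> R) (V0 : V -> Prop).
Hypothesis Hinc : forall x e, fst (ends e) = x \/ snd (ends e) = x -> In e (incident x).

Local Notation state := (state V E).
Local Notation outcome := (@outcome V E ends V0).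
Local Notation norm1 := (@norm1 V E m k).

Lemma outcome_node_perturbs (f : state) x :
  perturbs (incident x) (snd f) (snd (outcome f (NodeClock E x))).
Proof.
  split; intros e; cbn.
  - intros Hout. destruct (cdec (fst (ends e) = x)); [exfalso; apply Hout, Hinc; now left|].
    destruct (cdec (snd (ends e) = x)); [exfalso; apply Hout, Hinc; now right | reflexivity].
  - destruct (cdec (fst (ends e) = x)); [|destruct (cdec (snd (ends e) = x))]; lia.
Qed.

Lemma outcome_edge_perturbs (f : state) e :
  perturbs (fst (ends e) :: snd (ends e) :: nil) (fst f) (fst (outcome f (EdgeClock V e))).
Proof.
  split; intros z; cbn.
  - intros Hout. destruct (cdec (z = fst (ends e))); [exfalso; apply Hout; now left|].
    destruct (cdec (z = snd (ends e))); [exfalso; apply Hout; right; now left | reflexivity].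
  - destruct (cdec (z = fst (ends e))); [|destruct (cdec (z = snd (ends e)))];
      try destruct (cdec (V0 z)); lia.
Qed.

Lemma in_F0_outcome (f : state) c : in_F0 f -> in_F0 (outcome f c).
Proof.
  intros [Hf1 Hf2]. destruct c as [x|e]; split; try assumption.
  - exact (finsupp_perturbs Hf2 (outcome_node_perturbs f x)).
  - exact (finsupp_perturbs Hf1 (outcome_edge_perturbs f e)).
Qed.

Variables (M : R) (d : nat).
Hypotheses (Hk : forall e, 0 <= k e) (Hm : forall x, 0 < m x)
           (HMm : forall x, / m x <= M) (HMk : forall e, k e <= M)
           (Hloop : forall e, fst (ends e) <> snd (ends e))
           (Hincnd : forall x, NoDup (incident x))
           (Hdeg : forall x, (length (incident x) <= d)%nat) (Hd2 : (2 <= d)%nat).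

Lemma norm1_eq_wnorm (f : state) :
  norm1 f = wnorm (fun x => / m x) (fst f) + wnorm k (snd f).
Proof.
  unfold norm1, wnorm. f_equal. apply rsum_ext; intros x _. unfold Rdiv. ring.
Qed.

Lemma M_nonneg (x : V) : 0 <= M.
Proof. pose proof (Rinv_0_lt_compat _ (Hm x)). pose proof (HMm x). lra. Qed.

Lemma norm1_outcome_le (f : state) c : in_F0 f -> norm1 (outcome f c) <= norm1 f + M * INR d.
Proof.
  intros [Hf1 Hf2]. rewrite !norm1_eq_wnorm.
  assert (Hd : 2 <= INR d) by (apply (le_INR 2); exact Hd2).
  destruct c as [x|e].
  - pose proof (wnorm_perturbs_le k Hf2 (Hincnd x) (fun e => conj (Hk e) (HMk e))
                  (outcome_node_perturbs f x)).
    pose proof (le_INR _ _ (Hdeg x)). pose proof (M_nonneg x).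
    cbn [fst snd Defs.outcome] in *. nra.
  - assert (Hends : NoDup (fst (ends e) :: snd (ends e) :: nil)).
    { constructor; [intros [Heq|[]]; now apply (Hloop e) | repeat constructor; intros []]. }
    assert (Hw : forall x, 0 <= / m x <= M).
    { intros x; split; [left; apply Rinv_0_lt_compat, Hm | apply HMm]. }
    pose proof (wnorm_perturbs_le (fun x => / m x) Hf1 Hends Hw (outcome_edge_perturbs f e)).
    pose proof (M_nonneg (fst (ends e))).
    cbn [fst snd Defs.outcome length INR] in *. nra.
Qed.

End LocalJumps.

Theorem lemma2p4
  (V E : Type) (ends : E -> V * V) (incident : V -> list E)
  (m : V -> R) (k : E -> R) (V0 : V -> Prop)
  (* V is finite or countable *)
  (HVcount : exists enc : V -> nat, forall x y, enc x = enc y -> x = y)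
  (* no self-loops, at most one edge between two nodes *)
  (Hloop : forall e, fst (ends e) <> snd (ends e))
  (Hsimple : forall e e', ends e = ends e' \/
                          ends e = (snd (ends e'), fst (ends e')) -> e = e')
  (* incident x lists (without repetition) the edges at x, i.e. the y ~ x *)
  (Hinc : forall x e, In e (incident x) <-> (fst (ends e) = x \/ snd (ends e) = x))
  (Hincnd : forall x, NoDup (incident x))
  (Hk : forall e, 0 <= k e)
  (Hm : forall x, 0 < m x)
  (* d0 = sup_x #{y : y ~ x} < infinity *)
  (d0 : nat)
  (Hd0ub : forall x, (length (incident x) <= d0)%nat)
  (Hd0lub : forall d', (forall x, (length (incident x) <= d')%nat) -> (d0 <= d')%nat)
  (* M = max(sup_x 1/m_x, sup_<x,y> k_xy) < infinity *)
  (M : R)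
  (HMub : (forall x, / m x <= M) /\ (forall e, k e <= M))
  (HMlub : forall M', (forall x, / m x <= M') -> (forall e, k e <= M') -> M <= M')
  (f : state V E) (Hf : in_F0 f)
  (n : nat) (Hn : (1 <= n)%nat) (t : R) (Ht : 0 <= t) :
  xi_survival ends m k V0 n f t >=
  exp (- ((INR (n - 1) * M * INR (Nat.max d0 2) + norm1 m k f) * t)).
Proof.
  destruct HMub as [HMm HMk].
  set (d := Nat.max d0 2).
  (* On an empty graph [M] is only constrained by its least-upper-bound property. *)
  assert (HM0 : 0 <= M).
  { destruct (classic (exists x : V, True)) as [[x _]|Hempty].
    - exact (M_nonneg m Hm HMm x).
    - assert (M <= M - 1); [|lra].
      apply HMlub; intros z; exfalso; apply Hempty;
        [exists z | exists (fst (ends z))]; trivial. }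
  assert (Hd : 0 <= INR d) by apply pos_INR.
  assert (Hd2 : (2 <= d)%nat) by lia.
  assert (Hdeg : forall x, (length (incident x) <= d)%nat)
    by (intros x; specialize (Hd0ub x); lia).
  assert (Hinc_at : forall x e, fst (ends e) = x \/ snd (ends e) = x -> In e (incident x))
    by (intros x e; apply Hinc).
  apply Rle_ge. unfold xi_survival.
  replace (INR (n - 1) * M * INR d + norm1 m k f)
    with (norm1 m k f + INR (n - 1) * (M * INR d)) by ring.
  apply (jump_exp_ge ends m k V0 Hk Hm (@in_F0 V E) (norm1 m k) (fun s => exp (- (s * t))));
    try assumption.
  - now apply Rmult_le_pos.
  - intros s s' Hs. apply exp_le_compat. nra.
  - exact (in_F0_outcome ends incident V0 Hinc_at).
  - exact (norm1_outcome_le ends incident m k V0 Hinc_at Hk Hm HMm HMk Hloop Hincnd Hdeg Hd2).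
  - intros g _. apply exp_le_compat. pose proof (qrate_le_norm1 ends m k V0 Hk Hm g). nra.
Qed.
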